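(* Let $P$ be a finite $p$-group containing a non-trivial proper subgroup $H$ with the following property: for every subgroup $H'\le P$ containing $H$ with $[H':H]=p$, the group $H'$ is cyclic. Then $P$ is cyclic or generalized quaternion.
   Context: The generalized quaternion group of order $2^n$, $n\ge3$, is $Q_{2^n}=\langle x,y\mid x^{2^{n-1}}=1,\ y^2=x^{2^{n-2}},\ yxy^{-1}=x^{-1}\rangle$. *)

From mathcomp Require Import all_boot all_fingroup all_solvable.
Set Implicit Arguments.
Unset Strict Implicit.
Unset Printing Implicit Defensive.

From mathcomp Require Import all_boot all_fingroup all_solvable.
Local Open Scope group_scope.
Set Implicit Arguments.
Unset Strict Implicit.
Unset Printing Implicit Defensive.

(* An element y of order p normalising H but outside H would generate with H a
   cyclic overgroup of index p, whose unique subgroup of order p lies in H; so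
   such y do not exist.  Consequently no elementary abelian E of order p^2 is
   normalised by H: a central element of order p of HE lies in H, so H meets E
   in order p and HE is a cyclic overgroup of index p containing E.  Hence all
   normal abelian subgroups of P are cyclic, and P is cyclic, dihedral,
   semidihedral or generalized quaternion.  Moreover H lies in 'Phi(P): a
   cyclic overgroup K of index p not contained in a maximal subgroup M would
   have two subgroups H and K :&: M of the same order.  In the dihedral and
   semidihedral cases H is thus characteristic in the maximal cyclic subgroup,
   hence normal, and the involutions outside that subgroup contradict the
   first remark. *)

Lemma pgroup_overgroup_index_p (gT : finGroupType) (p : nat) (P H : {group gT}) :
  p.-group P -> H \proper P ->
  exists2 K : {group gT}, H \subset K & K \subset P /\ #|K : H| = p.
Proof.
move=> pP prHP.
have [K minK] : {K | [min K | H \proper K & K \subset P]}.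
  by apply: ex_mingroup; exists P; rewrite prHP subxx.
have [/andP[prHK sKP] minHK] := mingroupP minK.
exists K; first exact: proper_sub; split=> //.
apply: p_maximal_index (pgroupS sKP pP) _.
apply/maxgroupP; split=> // L prLK sHL; apply/eqP.
rewrite eq_sym eqEproper sHL /=; apply/negP => prHL.
have sLK := proper_sub prLK.
have defL : L :=: K by apply: minHK; rewrite // prHL (subset_trans sLK).
by rewrite defL properxx in prLK.
Qed.

Lemma noncyclic_normal_abelian_abelem (gT : finGroupType) (p : nat) (P A : {group gT}) :
  p.-group P -> A <| P -> abelian A -> ~~ cyclic A ->
  exists E : {group gT}, [/\ E <| P, p.-abelem E & #|E| = (p ^ 2)%N].
Proof.
move=> pP nsAP cAA ncycA.
have pA := pgroupS (normal_sub nsAP) pP.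
have nsOP : 'Ohm_1(A) <| P := char_normal_trans (Ohm_char 1 A) nsAP.
have rankA : 2 <= logn p #|'Ohm_1(A)|.
  by rewrite -p_rank_abelian // -rank_pgroup // ltnNge -abelian_rank1_cyclic.
have [E [sEO nsEP oE]] := normal_pgroup pP nsOP rankA.
by exists E; split; rewrite ?(abelemS sEO (Ohm1_abelem pA cAA)).
Qed.

Section CyclicOvergroups.

Variables (gT : finGroupType) (p : nat) (P H : {group gT}).
Hypotheses (pr_p : prime p) (pP : p.-group P) (ntH : H :!=: 1) (prHP : H \proper P).
Hypothesis cyclic_overgroups : forall K : {group gT},
  H \subset K -> K \subset P -> #|K : H| = p -> cyclic K.

Let sHP : H \subset P := proper_sub prHP.
Let pH : p.-group H := pgroupS sHP pP.

Lemma cyclic_H : cyclic H.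
Proof.
have [K sHK [sKP iKH]] := pgroup_overgroup_index_p pP prHP.
exact: cyclicS sHK (cyclic_overgroups sHK sKP iKH).
Qed.

Lemma normalizer_order_p_mem y : y \in P -> y \in 'N(H) -> #[y] = p -> y \in H.
Proof.
move=> Py nHy oy; apply: contraT => notHy.
have nHY : <[y]> \subset 'N(H) by rewrite cycle_subG.
have tiHY : H :&: <[y]> = 1 by rewrite setIC prime_TIg ?cycle_subG // -orderE oy.
have iHYH : #|H <*> <[y]> : H| = p.
  rewrite -divgS ?joing_subl //= norm_joinEr // TI_cardMg // -orderE oy.
  by rewrite mulKn ?cardG_gt0.
have sHYP : H <*> <[y]> \subset P by rewrite join_subG sHP cycle_subG.
have cycHY := cyclic_overgroups (joing_subl H <[y]>) sHYP iHYH.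
have [_ p_dv_H _] := pgroup_pdiv pH ntH.
have [z Hz oz] := Cauchy pr_p p_dv_H.
have sZHY : <[z]> \subset H <*> <[y]>.
  by rewrite (subset_trans _ (joing_subl _ _)) // cycle_subG.
have /eqP defY : <[y]> :==: <[z]>.
  by rewrite (eq_subG_cyclic cycHY (joing_subr _ _) sZHY) -!orderE oy oz.
by case/negP: notHy; rewrite -cycle_subG defY cycle_subG.
Qed.

Lemma normalized_abelem_card_neq_p2 (E : {group gT}) :
  E \subset P -> H \subset 'N(E) -> p.-abelem E -> #|E| != (p ^ 2)%N.
Proof.
move=> sEP nEH abelE; apply/eqP => oE.
have sHEP : H <*> E \subset P by rewrite join_subG sHP.
have nsEHE : E <| H <*> E by rewrite /normal joing_subr join_subG nEH normG.
have ntE : E :!=: 1 by rewrite -cardG_gt1 oE (ltn_exp2l 0) ?prime_gt1.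
have nilHE := pgroup_nil (pgroupS sHEP pP).
have /trivgPn[y /setIP[Ey Zy] nty] := meet_center_nil nilHE nsEHE ntE.
have Hy : y \in H.
  apply: normalizer_order_p_mem (subsetP sEP y Ey) _ (abelem_order_p abelE Ey nty).
  apply: (subsetP (cent_sub H)).
  exact: subsetP (centS (joing_subl H E)) y (subsetP (subsetIr _ _) y Zy).
have oHE : #|H :&: E| = p.
  apply: cyclic_abelem_prime (abelemS (subsetIr H E) abelE) _ _.
    exact: cyclicS (subsetIl H E) cyclic_H.
  by apply/trivgPn; exists y; rewrite ?inE ?Hy.
have iHEH : #|H <*> E : H| = p.
  rewrite norm_joinEl // indexMg -indexgI setIC -divgS ?subsetIr // oHE oE.
  by rewrite (expnS p 1) expn1 mulKn ?prime_gt0.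
have := cyclicS (joing_subr H E) (cyclic_overgroups (joing_subl H E) sHEP iHEH).
by rewrite (abelem_cyclic abelE) oE pfactorK.
Qed.

Lemma normal_abelian_cyclic (A : {group gT}) : A <| P -> abelian A -> cyclic A.
Proof.
move=> nsAP cAA; apply: contraT => ncycA.
have [E [nsEP abelE oE]] := noncyclic_normal_abelian_abelem pP nsAP cAA ncycA.
have nEH := subset_trans sHP (normal_norm nsEP).
by have := normalized_abelem_card_neq_p2 (normal_sub nsEP) nEH abelE; rewrite oE eqxx.
Qed.

Lemma sub_Phi : H \subset 'Phi(P).
Proof.
apply/bigcapsP => M /predU1P[-> // | maxM]; apply: contraT => not_sHM.
have [K sHK [sKP iKH]] := pgroup_overgroup_index_p pP prHP.
have cycK := cyclic_overgroups sHK sKP iKH.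
have not_sKM : ~~ (K \subset M) by apply: contra not_sHM; apply: subset_trans.
have iKM : #|K : K :&: M| = p.
  have defP := mulg_normal_maximal (p_maximal_normal pP maxM) maxM sKP not_sKM.
  by rewrite indexgI -indexMg defP (p_maximal_index pP maxM).
have /eqP defH : H :==: K :&: M.
  rewrite (eq_subG_cyclic cycK sHK (subsetIl K M)) -(eqn_pmul2r (prime_gt0 pr_p)).
  by rewrite -{1}iKH -iKM !Lagrange ?subsetIl.
by case/negP: not_sHM; rewrite defH subsetIr.
Qed.

Lemma extremal_generators_order_neq n x y :
  extremal_generators P p n (x, y) -> #[y] != p.
Proof.
move=> genP; have [_ maxX _ _ _] := extremal_generators_facts pr_p genP.
have [_ _ _ /setDP[Py notXy]] := genP; apply: contraNneq notXy => oy.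
have sHX : H \subset <[x]> := subset_trans sub_Phi (Phi_sub_max maxX).
have nsHP : H <| P.
  exact: char_normal_trans (cycle_subgroup_char sHX) (p_maximal_normal pP maxX).
have Hy := normalizer_order_p_mem Py (subsetP (normal_norm nsHP) y Py) oy.
exact: subsetP sHX y Hy.
Qed.

End CyclicOvergroups.

Theorem lemma5p3 (gT : finGroupType) (p : nat) (P H : {group gT}) :
  prime p -> p.-group P ->
  H :!=: 1 -> H \proper P ->
  (forall H' : {group gT}, H \subset H' -> H' \subset P ->
     #|H' : H| = p -> cyclic H') ->
  cyclic P \/ exists2 n : nat, 2 < n & P \isog 'Q_(2 ^ n).
Proof.
move=> pr_p pP ntH prHP cyc_over.
have cyc_nab := normal_abelian_cyclic pr_p pP ntH prHP cyc_over.
have [|/and3P[/eqP p2 extP _]] := normal_rank1_structure pP cyc_nab; first by left.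
have gen_neq := extremal_generators_order_neq pr_p pP ntH prHP cyc_over.
rewrite p2 in gen_neq; move: extP; rewrite /extremal2 !inE => /or3P[] /eqP clP.
- case/dihedral_classP: clP => n n_gt1 isoP.
  have [[x y] genP [oy _]] := generators_2dihedral n_gt1 isoP.
  by have := gen_neq _ _ _ genP; rewrite oy.
- case/semidihedral_classP: clP => n n_gt3 isoP.
  have [[x y] genP [oy _]] := generators_semidihedral n_gt3 isoP.
  by have := gen_neq _ _ _ genP; rewrite oy.
by right; apply/quaternion_classP.
Qed.
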